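(* Assume the van Kampen setup below with $B_k=X_k$ for $k=0,1,2$ (so $B=X$), and let $P_k:\vec\pi_1(X_k)\to\vec\pi_1(X_k,A_k)$, $k=0,1,2$, be compatible future retracts. Let $a,a'\in A$ and let $[\gamma]:a\to a'$ be a morphism of $\vec\pi_1(X,A)$. Then there exist $n\ge 1$, points $a=y_0,y_1,\dots,y_n=a'$ of $A$, indices $k_1,\dots,k_n\in\{1,2\}$ and morphisms $\alpha_i:y_{i-1}\to y_i$ of $\vec\pi_1(X_{k_i},A_{k_i})$ such that $[\gamma]=\alpha_n\circ\dots\circ\alpha_1$ in $\vec\pi_1(X)$ (where each $\alpha_i$ is regarded in $\vec\pi_1(X)$ via the functor induced by the inclusion $X_{k_i}\subseteq X$).
   Context: A d-space is a topological space with a set of continuous paths $[0,1]\to X$ (dipaths) containing all constant paths, closed under precomposition with continuous non-decreasing maps $[0,1]\to[0,1]$ and under concatenation; subsets carry the dipaths with image in them; a dimap is a continuous map preserving dipaths. $\vec I$ is $[0,1]$ with non-decreasing paths as dipaths. The fundamental category $\vec\pi_1(X)$ has objects the points of $X$ and morphisms $a\to b$ the classes of dipaths from $a$ to $b$ modulo the equivalence relation generated by endpoint-fixing directed homotopies (dimaps $H:\vec I\times\vec I\to X$ with $H(\cdot,0)=\gamma$, $H(\cdot,1)=\gamma'$, $H(0,s)=a$, $H(1,s)=b$); composition is concatenation. For $A\subseteq X$, $\vec\pi_1(X,A)$ is the full subcategory on objects in $A$. Inclusions of d-spaces induce functors between these categories. For $A\subseteq B\subseteq X$ with inclusion $\iota:\vec\pi_1(X,A)\to\vec\pi_1(X,B)$,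 a future retract is a functor $P:\vec\pi_1(X,B)\to\vec\pi_1(X,A)$ left adjoint to $\iota$ whose unit $\eta$ satisfies $\eta_a=\mathrm{id}_a$ for $a\in A$. Van Kampen setup: $X$ is a d-space, $X_1,X_2\subseteq X$ with $X=\mathrm{Int}(X_1)\cup\mathrm{Int}(X_2)$, the dipaths of $X$ are the finite concatenations of dipaths of $X_1$ and of $X_2$, and $X_0=X_1\cap X_2$. For $k=0,1,2$, $A_k\subseteq B_k\subseteq X_k$, with $A_0=A_1\cap A_2$, $B_0=B_1\cap B_2$, $A=A_1\cup A_2$, $B=B_1\cup B_2$, $A=\mathrm{Int}_A(A_1)\cup\mathrm{Int}_A(A_2)$, $B=\mathrm{Int}_B(B_1)\cup\mathrm{Int}_B(B_2)$. Inclusions induce functors $i_k:\vec\pi_1(X_0,B_0)\to\vec\pi_1(X_k,B_k)$ and $i'_k:\vec\pi_1(X_0,A_0)\to\vec\pi_1(X_k,A_k)$ for $k=1,2$. Functors $P_k:\vec\pi_1(X_k,B_k)\to\vec\pi_1(X_k,A_k)$, $k=0,1,2$, are compatible future retracts if each $P_k$ is a future retract with unit $\eta^k$, $P_k\circ i_k=i'_k\circ P_0$ for $k=1,2$, and for every $x\in B_0$ the image of $\eta^0_x$ under the functor $\vec\pi_1(X_0)\to\vec\pi_1(X_k)$ equals $\eta^k_x$ ($k=1,2$). *)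

From Stdlib Require Import Reals Lra Relations.
Open Scope R_scope.

Definition I : Type := { t : R | 0 <= t <= 1 }.
Definition ival (t : I) : R := proj1_sig t.

Lemma clamp_in (r : R) : 0 <= Rmax 0 (Rmin 1 r) <= 1.
Proof.
  unfold Rmax, Rmin; repeat destruct Rle_dec; lra.
Qed.
Definition clampI (r : R) : I := exist _ (Rmax 0 (Rmin 1 r)) (clamp_in r).

Lemma zero_in : 0 <= 0 <= 1. Proof. lra. Qed.
Lemma one_in : 0 <= 1 <= 1. Proof. lra. Qed.
Definition I0 : I := exist _ 0 zero_in.
Definition I1 : I := exist _ 1 one_in.

Definition cont_I (phi : I -> I) : Prop :=
  forall t eps, 0 < eps -> exists delta, 0 < delta /\
    forall s, Rabs (ival s - ival t) < delta -> Rabs (ival (phi s) - ival (phi t)) < eps.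
Definition nondecr (phi : I -> I) : Prop :=
  forall s t, ival s <= ival t -> ival (phi s) <= ival (phi t).

Definition cont_path {X : Type} (opn : (X -> Prop) -> Prop) (g : I -> X) : Prop :=
  forall U, opn U -> forall t, U (g t) -> exists eps, 0 < eps /\
    forall s, Rabs (ival s - ival t) < eps -> U (g s).

(** Continuity of a map I x I -> X (product = metric topology). *)
Definition cont2 {X : Type} (opn : (X -> Prop) -> Prop) (H : I -> I -> X) : Prop :=
  forall U, opn U -> forall t s, U (H t s) -> exists eps, 0 < eps /\
    forall t' s', Rabs (ival t' - ival t) < eps -> Rabs (ival s' - ival s) < eps ->
      U (H t' s').

Definition pcat {X : Type} (g h : I -> X) : I -> X := fun t =>
  if Rle_dec (ival t) (1/2) then g (clampI (2 * ival t))
  else h (clampI (2 * ival t - 1)).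

Record Dspace := {
  pt : Type;
  opn : (pt -> Prop) -> Prop;
  opn_full : opn (fun _ => True);
  opn_inter : forall U V, opn U -> opn V -> opn (fun x => U x /\ V x);
  opn_union : forall F : (pt -> Prop) -> Prop, (forall U, F U -> opn U) ->
                opn (fun x => exists U, F U /\ U x);
  dip : (I -> pt) -> Prop;
  dip_cont : forall g, dip g -> cont_path opn g;
  dip_const : forall x, dip (fun _ => x);
  dip_reparam : forall g phi, dip g -> cont_I phi -> nondecr phi ->
                  dip (fun t => g (phi t));
  dip_concat : forall g h, dip g -> dip h -> g I1 = h I0 -> dip (pcat g h)
}.

Section Dsp.
Variable X : Dspace.

Definition Int (S : pt X -> Prop) (x : pt X) : Prop :=
  exists U, opn X U /\ U x /\ forall z, U z -> S z.
Definition IntRel (A S : pt X -> Prop) (x : pt X) : Prop :=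
  A x /\ exists U, opn X U /\ U x /\ forall z, U z -> A z -> S z.

(** A dipath of the sub-d-space S (dipaths of X with image in S) from x to y,
    i.e. a representative of a morphism x -> y of the fundamental category of S. *)
Definition dpath (S : pt X -> Prop) (x y : pt X) (g : I -> pt X) : Prop :=
  dip X g /\ (forall t, S (g t)) /\ g I0 = x /\ g I1 = y.

(** Endpoint-fixing directed homotopy in S from g to g': a dimap
    vec I x vec I -> S (continuous, sending pairs of dipaths of vec I to dipaths). *)
Definition dhtpy (S : pt X -> Prop) (g g' : I -> pt X) : Prop :=
  exists H : I -> I -> pt X,
    cont2 (opn X) H /\
    (forall phi psi, cont_I phi -> nondecr phi -> cont_I psi -> nondecr psi ->
        dip X (fun t => H (phi t) (psi t))) /\
    (forall t s, S (H t s)) /\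
    (forall t, H t I0 = g t) /\ (forall t, H t I1 = g' t) /\
    (forall s, H I0 s = g I0) /\ (forall s, H I1 s = g I1).

(** Equality of morphisms in the fundamental category of S: the equivalence
    relation generated by directed homotopies in S. *)
Definition dheq (S : pt X -> Prop) : relation (I -> pt X) :=
  clos_refl_sym_trans _ (dhtpy S).

(** [P] = (Pob, Pmor) is a future retract  pi1(S) -> pi1(S,T)  (T subset S),
    with unit eta.  Morphisms are represented by dipaths, their equality by [dheq S];
    composition  g o f  is [pcat f g].  The adjunction P -| iota is given by a
    natural transformation eta : Id => iota P whose components are universal arrows. *)
Definition IsFutureRetract (S T : pt X -> Prop) (Pob : pt X -> pt X)
    (Pmor : (I -> pt X) -> (I -> pt X)) (eta : pt X -> I -> pt X) : Prop :=
  (forall x, S x -> T (Pob x)) /\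
  (forall x y g, dpath S x y g -> dpath S (Pob x) (Pob y) (Pmor g)) /\
  (forall x y g g', dpath S x y g -> dpath S x y g' -> dheq S g g' ->
       dheq S (Pmor g) (Pmor g')) /\
  (forall x, S x -> dheq S (Pmor (fun _ => x)) (fun _ => Pob x)) /\
  (forall x y z g h, dpath S x y g -> dpath S y z h ->
       dheq S (Pmor (pcat g h)) (pcat (Pmor g) (Pmor h))) /\
  (forall x, S x -> dpath S x (Pob x) (eta x)) /\
  (forall x y g, dpath S x y g -> dheq S (pcat g (eta y)) (pcat (eta x) (Pmor g))) /\
  (forall x a f, S x -> T a -> dpath S x a f ->
       (exists g, dpath S (Pob x) a g /\ dheq S (pcat (eta x) g) f) /\
       (forall g g', dpath S (Pob x) a g -> dpath S (Pob x) a g' ->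
          dheq S (pcat (eta x) g) f -> dheq S (pcat (eta x) g') f -> dheq S g g')) /\
  (forall a, T a -> dheq S (eta a) (fun _ => a)).

Definition Compatible (Xk Ak : nat -> pt X -> Prop) (Pob : nat -> pt X -> pt X)
    (Pmor : nat -> (I -> pt X) -> (I -> pt X)) (eta : nat -> pt X -> I -> pt X) : Prop :=
  (forall k, k <= 2 -> IsFutureRetract (Xk k) (Ak k) (Pob k) (Pmor k) (eta k))%nat /\
  forall k, (k = 1 \/ k = 2)%nat ->
    (forall x, Xk 0%nat x -> Pob k x = Pob 0%nat x) /\
    (forall x y g, dpath (Xk 0%nat) x y g -> dheq (Xk k) (Pmor k g) (Pmor 0%nat g)) /\
    (forall x, Xk 0%nat x -> dheq (Xk k) (eta 0%nat x) (eta k x)).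

End Dsp.

(** Iterated composition alpha_n o ... o alpha_1  (= alpha_1 * ... * alpha_n). *)
Fixpoint cats {T : Type} (alpha : nat -> I -> T) (n : nat) : I -> T :=
  match n with
  | O => alpha O
  | S m => match m with
           | O => alpha 1%nat
           | _ => pcat (cats alpha m) (alpha n)
           end
  end.

(* Let gamma : a -> a' be a dipath of X between points of A.
   1. Subdivision: up to reparametrization, gamma is the composite of a chain of
      dipaths g_i : x_(i-1) -> x_i, each lying in some X_(k_i).
   2. Telescoping: naturality of the unit gives g_i . eta(x_i) = eta(x_(i-1)) . P(g_i)
      in pi1(X_(k_i)), and the units of P_(k_i) and P_(k_(i+1)) at x_i agree since the
      retracts are compatible over X_0; hence
      g_1 ... g_n . eta(x_n) = eta(x_0) . P(g_1) ... P(g_n).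
   3. At x_0 = a and x_n = a' in A the units are trivial and P fixes points, so
      gamma = P(g_1) ... P(g_n), with y_i = P(x_i). *)

From Stdlib Require Import Reals Lra Lia Relations.
From Stdlib Require Import Classical ClassicalEpsilon FunctionalExtensionality ProofIrrelevance.
Open Scope R_scope.

Lemma I_eq (u v : I) : ival u = ival v -> u = v.
Proof.
  destruct u as [x hx], v as [y hy]; simpl; intros ->; f_equal; apply proof_irrelevance.
Qed.

Lemma ival_rng (u : I) : 0 <= ival u <= 1.
Proof. destruct u; simpl; auto. Qed.

Lemma clamp_val (r : R) : 0 <= r <= 1 -> ival (clampI r) = r.
Proof. intros; simpl; unfold Rmax, Rmin; repeat destruct Rle_dec; lra. Qed.

Lemma clamp_lip (r r' : R) : Rabs (ival (clampI r) - ival (clampI r')) <= Rabs (r - r').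
Proof.
  simpl; unfold Rmax, Rmin, Rabs; repeat destruct Rle_dec; repeat destruct Rcase_abs; lra.
Qed.

Lemma clamp_mono (r r' : R) : r <= r' -> ival (clampI r) <= ival (clampI r').
Proof. simpl; unfold Rmax, Rmin; repeat destruct Rle_dec; lra. Qed.

Lemma clamp_ge1 (r : R) : 1 <= r -> clampI r = I1.
Proof. intros; apply I_eq; simpl; unfold Rmax, Rmin; repeat destruct Rle_dec; lra. Qed.

Lemma clamp_le0 (r : R) : r <= 0 -> clampI r = I0.
Proof. intros; apply I_eq; simpl; unfold Rmax, Rmin; repeat destruct Rle_dec; lra. Qed.

Definition contR (f : I -> R) : Prop :=
  forall t eps, 0 < eps -> exists d, 0 < d /\
    forall s, Rabs (ival s - ival t) < d -> Rabs (f s - f t) < eps.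

Lemma contR_ext (f g : I -> R) : (forall t, f t = g t) -> contR f -> contR g.
Proof.
  intros E H t e he; destruct (H t e he) as [d [hd Hd]]; exists d; split; auto.
  intros s hs; rewrite <- !E; auto.
Qed.

Lemma contR_ival : contR ival.
Proof. intros t e he; exists e; split; auto. Qed.

Lemma contR_scale (f : I -> R) (p q : R) : contR f -> contR (fun t => p + q * f t).
Proof.
  intros H t e he. destruct (H t (e / (Rabs q + 1))) as [d [hd D]].
  { apply Rdiv_lt_0_compat; auto. pose proof (Rabs_pos q); lra. }
  exists d; split; auto. intros s hs.
  replace (p + q * f s - (p + q * f t)) with (q * (f s - f t)) by ring.
  rewrite Rabs_mult. pose proof (Rabs_pos q). pose proof (Rabs_pos (f s - f t)).
  specialize (D s hs).
  assert (Rabs (f s - f t) * (Rabs q + 1) < e).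
  { apply (Rmult_lt_compat_r (Rabs q + 1)) in D; [|lra].
    unfold Rdiv in D; rewrite Rmult_assoc, Rinv_l in D; lra. }
  nra.
Qed.

Lemma contR_max (f g : I -> R) : contR f -> contR g -> contR (fun t => Rmax (f t) (g t)).
Proof.
  intros Hf Hg t e he. destruct (Hf t (e/2)) as [d1 [h1 D1]]; [lra|].
  destruct (Hg t (e/2)) as [d2 [h2 D2]]; [lra|].
  exists (Rmin d1 d2); split; [apply Rmin_pos; lra|]. intros s hs.
  pose proof (Rmin_l d1 d2); pose proof (Rmin_r d1 d2).
  assert (A1 : Rabs (f s - f t) < e/2) by (apply D1; lra).
  assert (A2 : Rabs (g s - g t) < e/2) by (apply D2; lra).
  revert A1 A2. unfold Rmax, Rabs; repeat destruct Rle_dec; repeat destruct Rcase_abs; lra.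
Qed.

Lemma contR_glue (c : R) (f1 f2 : I -> R) : contR f1 -> contR f2 ->
  (forall t, ival t = c -> f1 t = f2 t) ->
  contR (fun t => if Rle_dec (ival t) c then f1 t else f2 t).
Proof.
  intros H1 H2 E t e he.
  destruct (H1 t e he) as [d1 [hd1 D1]]. destruct (H2 t e he) as [d2 [hd2 D2]].
  destruct (Rtotal_order (ival t) c) as [lt|[eq|gt]].
  - exists (Rmin d1 (c - ival t)). split; [apply Rmin_pos; lra|].
    intros s hs. pose proof (Rmin_l d1 (c - ival t)); pose proof (Rmin_r d1 (c - ival t)).
    destruct (Rle_dec (ival s) c); destruct (Rle_dec (ival t) c); try lra.
    + apply D1; lra.
    + exfalso. unfold Rabs in hs; destruct Rcase_abs in hs; lra.
  - exists (Rmin d1 d2). split; [apply Rmin_pos; lra|].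
    intros s hs. pose proof (Rmin_l d1 d2); pose proof (Rmin_r d1 d2).
    destruct (Rle_dec (ival t) c); [|lra].
    destruct (Rle_dec (ival s) c).
    + apply D1; lra.
    + rewrite (E t eq). apply D2; lra.
  - exists (Rmin d2 (ival t - c)). split; [apply Rmin_pos; lra|].
    intros s hs. pose proof (Rmin_l d2 (ival t - c)); pose proof (Rmin_r d2 (ival t - c)).
    destruct (Rle_dec (ival s) c); destruct (Rle_dec (ival t) c); try lra.
    + exfalso. unfold Rabs in hs; destruct Rcase_abs in hs; lra.
    + apply D2; lra.
Qed.

Lemma cont_clamp (f : I -> R) : contR f -> cont_I (fun t => clampI (f t)).
Proof.
  intros H t e he; destruct (H t e he) as [d [hd Hd]]; exists d; split; auto.
  intros s hs; eapply Rle_lt_trans; [apply clamp_lip | auto].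
Qed.

Lemma id_cont : cont_I (fun v => v).
Proof. intros t e he; exists e; split; auto. Qed.

Lemma id_nondecr : nondecr (fun v => v).
Proof. intros s t h; auto. Qed.

Lemma const_cont (c : I) : cont_I (fun _ => c).
Proof. intros t e he; exists 1; split; [lra|]; intros; rewrite Rminus_diag, Rabs_R0; auto. Qed.

Lemma const_nondecr (c : I) : nondecr (fun _ => c).
Proof. intros s t _; lra. Qed.

Lemma cont_comp (phi psi : I -> I) : cont_I phi -> cont_I psi -> cont_I (fun t => psi (phi t)).
Proof.
  intros Hp Hq t e he. destruct (Hq (phi t) e he) as [d [hd Hd]].
  destruct (Hp t d hd) as [d' [hd' Hd']]. exists d'; split; auto.
Qed.

Lemma nondecr_comp (phi psi : I -> I) : nondecr phi -> nondecr psi ->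
  nondecr (fun t => psi (phi t)).
Proof. intros Hp Hq s t h; apply Hq, Hp, h. Qed.

Definition lin (p q : R) (u : I) : I := clampI (p + ival u * (q - p)).

Lemma lin_cont (p q : R) : cont_I (lin p q).
Proof.
  unfold lin. apply cont_clamp.
  eapply contR_ext; [|apply (contR_scale ival p (q - p) contR_ival)]. intro; simpl; ring.
Qed.

Lemma lin_nondecr (p q : R) : p <= q -> nondecr (lin p q).
Proof. intros h s t hst; unfold lin; apply clamp_mono. nra. Qed.

Lemma lin_val (p q : R) (u : I) : 0 <= p <= q -> q <= 1 -> ival (lin p q u) = p + ival u * (q - p).
Proof. intros; unfold lin; apply clamp_val. pose proof (ival_rng u); nra. Qed.

Lemma lin_I0 (p q : R) : 0 <= p <= q -> q <= 1 -> ival (lin p q I0) = p.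
Proof. intros; rewrite lin_val; simpl; auto; ring. Qed.

Lemma lin_I1 (p q : R) : 0 <= p <= q -> q <= 1 -> ival (lin p q I1) = q.
Proof. intros; rewrite lin_val; simpl; auto; ring. Qed.

Lemma lin_01 (u : I) : lin 0 1 u = u.
Proof. apply I_eq; rewrite lin_val by lra; ring. Qed.

Lemma lin_same (p : R) (u : I) : lin p p u = clampI p.
Proof. unfold lin; f_equal; ring. Qed.

Lemma pcat_I0 {T : Type} (f g : I -> T) : pcat f g I0 = f I0.
Proof.
  unfold pcat; simpl; destruct Rle_dec; [|lra]. f_equal; apply I_eq; rewrite clamp_val; simpl; lra.
Qed.

Lemma pcat_I1 {T : Type} (f g : I -> T) : pcat f g I1 = g I1.
Proof.
  unfold pcat; simpl; destruct Rle_dec; [lra|]. f_equal; apply I_eq; rewrite clamp_val; simpl; lra.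
Qed.

Lemma pcat_comp {T : Type} (k : I -> T) (f g : I -> I) :
  pcat (fun u => k (f u)) (fun u => k (g u)) = (fun t => k (pcat f g t)).
Proof. apply functional_extensionality; intro t; unfold pcat; destruct Rle_dec; auto. Qed.

Lemma pcat_in {T : Type} (S : T -> Prop) (f g : I -> T) :
  (forall t, S (f t)) -> (forall t, S (g t)) -> forall t, S (pcat f g t).
Proof. intros; unfold pcat; destruct Rle_dec; auto. Qed.

Lemma double_cont : cont_I (fun t => clampI (2 * ival t)).
Proof.
  apply cont_clamp. eapply contR_ext; [|apply (contR_scale ival 0 2 contR_ival)].
  intro; simpl; ring.
Qed.

Lemma double1_cont : cont_I (fun t => clampI (2 * ival t - 1)).
Proof.
  apply cont_clamp. eapply contR_ext; [|apply (contR_scale ival (-1) 2 contR_ival)].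
  intro; simpl; ring.
Qed.

Lemma double_nondecr : nondecr (fun t => clampI (2 * ival t)).
Proof. intros s t h; apply clamp_mono; lra. Qed.

Lemma double1_nondecr : nondecr (fun t => clampI (2 * ival t - 1)).
Proof. intros s t h; apply clamp_mono; lra. Qed.

Lemma pcat_left {T : Type} (f g : I -> T) (t : I) :
  ival t <= 1/2 -> pcat f g t = f (clampI (2 * ival t)).
Proof. intros h; unfold pcat; destruct Rle_dec; [auto | lra]. Qed.

Lemma pcat_right {T : Type} (f g : I -> T) (t : I) : f I1 = g I0 ->
  1/2 <= ival t -> pcat f g t = g (clampI (2 * ival t - 1)).
Proof.
  intros E h; unfold pcat; destruct Rle_dec; auto.
  rewrite (clamp_ge1 (2 * ival t)), (clamp_le0 (2 * ival t - 1)) by lra. exact E.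
Qed.

Lemma pcat_cont (f g : I -> I) : cont_I f -> cont_I g -> ival (f I1) = ival (g I0) ->
  cont_I (pcat f g).
Proof.
  intros Hf Hg E.
  change (contR (fun t => ival (pcat f g t))).
  apply (contR_ext (fun t => if Rle_dec (ival t) (1/2) then ival (f (clampI (2 * ival t)))
                             else ival (g (clampI (2 * ival t - 1))))).
  { intro t. unfold pcat. destruct Rle_dec; reflexivity. }
  apply contR_glue.
  - exact (cont_comp _ f double_cont Hf).
  - exact (cont_comp _ g double1_cont Hg).
  - intros t ht. rewrite ht, (clamp_ge1 (2 * (1/2))), (clamp_le0 (2 * (1/2) - 1)) by lra.
    exact E.
Qed.

Lemma pcat_nondecr (f g : I -> I) : nondecr f -> nondecr g -> ival (f I1) <= ival (g I0) ->
  nondecr (pcat f g).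
Proof.
  intros Hf Hg E s t h. unfold pcat.
  destruct (Rle_dec (ival s) (1/2)); destruct (Rle_dec (ival t) (1/2)).
  - apply Hf, clamp_mono; lra.
  - apply Rle_trans with (ival (f I1)).
    { apply Hf. pose proof (ival_rng (clampI (2 * ival s))). simpl (ival I1). lra. }
    eapply Rle_trans; [exact E|]. apply Hg.
    pose proof (ival_rng (clampI (2 * ival t - 1))). simpl (ival I0). lra.
  - lra.
  - apply Hg, clamp_mono; lra.
Qed.

(** A continuous nondecreasing [phi] crosses any level [h] at some [c]: it is
    [<= h] at [c] (unless [c = 0]) and [>= h] at [c] (unless [c = 1]).
    [c] is the supremum of the points where [phi <= h]. *)
Lemma level_crossing (phi : I -> I) (h : R) : cont_I phi ->
  exists c, 0 <= c <= 1 /\ (0 < c -> ival (phi (clampI c)) <= h) /\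
                          (c < 1 -> h <= ival (phi (clampI c))).
Proof.
  intros cp.
  set (E := fun x => x = 0 \/ (0 <= x <= 1 /\ ival (phi (clampI x)) <= h)).
  destruct (completeness E) as [c [Hub Hl]].
  { exists 1. intros x [->|[hx _]]; lra. }
  { exists 0; left; auto. }
  assert (c0 : 0 <= c) by (apply Hub; left; auto).
  assert (c1 : c <= 1) by (apply Hl; intros x [->|[hx _]]; lra).
  exists c; split; [lra| split].
  - intros hc. destruct (Rle_dec (ival (phi (clampI c))) h) as [|n]; auto. exfalso.
    destruct (cp (clampI c) (ival (phi (clampI c)) - h)) as [d [hd Dd]]; [lra|].
    pose proof (Rmin_l d c); pose proof (Rmin_r d c).
    set (m := Rmin d c) in *. assert (0 < m) by (apply Rmin_pos; lra).
    assert (UB : is_upper_bound E (c - m/2)).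
    { intros x [->|[hx hp]]; [lra|].
      destruct (Rle_dec x (c - m/2)) as [|nx]; auto. exfalso.
      assert (x <= c) by (apply Hub; right; auto).
      assert (HH : Rabs (ival (clampI x) - ival (clampI c)) < d).
      { rewrite !clamp_val by lra. unfold Rabs; destruct Rcase_abs; lra. }
      specialize (Dd _ HH). unfold Rabs in Dd; destruct Rcase_abs in Dd; lra. }
    apply Hl in UB. lra.
  - intros hc. destruct (Rle_dec h (ival (phi (clampI c)))) as [|n]; auto. exfalso.
    destruct (cp (clampI c) (h - ival (phi (clampI c)))) as [d [hd Dd]]; [lra|].
    pose proof (Rmin_l d (1 - c)); pose proof (Rmin_r d (1 - c)).
    set (m := Rmin d (1 - c)) in *. assert (0 < m) by (apply Rmin_pos; lra).
    assert (Ec : E (c + m/2)).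
    { right. split; [lra|].
      assert (HH : Rabs (ival (clampI (c + m/2)) - ival (clampI c)) < d).
      { rewrite !clamp_val by lra. unfold Rabs; destruct Rcase_abs; lra. }
      specialize (Dd _ HH). unfold Rabs in Dd; destruct Rcase_abs in Dd; lra. }
    apply Hub in Ec. lra.
Qed.

Definition split_at (c : R) (u : I) : I :=
  clampI (if Rle_dec (ival u) c then ival u / (2 * c) else 1/2 + (ival u - c) / (2 * (1 - c))).

Lemma split_at_cont (c : R) : 0 < c < 1 -> cont_I (split_at c).
Proof.
  intros hc. unfold split_at. apply cont_clamp. apply contR_glue.
  - eapply contR_ext; [|apply (contR_scale ival 0 (/ (2 * c)) contR_ival)].
    intro; simpl; unfold Rdiv; ring.
  - eapply contR_ext;
      [|apply (contR_scale ival (1/2 - c / (2 * (1 - c))) (/ (2 * (1 - c))) contR_ival)].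
    intro; simpl; unfold Rdiv; ring.
  - intros t ->. field. lra.
Qed.

Lemma split_at_nondecr (c : R) : 0 < c < 1 -> nondecr (split_at c).
Proof.
  intros hc s t h. unfold split_at. apply clamp_mono.
  assert (0 < / (2 * c)) by (apply Rinv_0_lt_compat; lra).
  assert (0 < / (2 * (1 - c))) by (apply Rinv_0_lt_compat; lra).
  assert (c * / (2 * c) = 1/2) by (field; lra).
  unfold Rdiv.
  destruct (Rle_dec (ival s) c); destruct (Rle_dec (ival t) c).
  - apply Rmult_le_compat_r; lra.
  - assert (ival s * / (2 * c) <= c * / (2 * c)) by (apply Rmult_le_compat_r; lra).
    assert (0 <= (ival t - c) * / (2 * (1 - c))) by (apply Rmult_le_pos; lra).
    lra.
  - lra.
  - apply Rplus_le_compat_l, Rmult_le_compat_r; lra.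
Qed.

Definition Fr (a b s : R) : R := a + s * (b - a).

Lemma Fr_est (a a' b b' s s' : R) : 0 <= s' <= 1 -> 0 <= a <= 1 -> 0 <= b <= 1 ->
  Rabs (Fr a' b' s' - Fr a b s) <= 2 * Rabs (a' - a) + Rabs (b' - b) + Rabs (s' - s).
Proof.
  intros hs ha hb. unfold Fr.
  replace (a' + s' * (b' - a') - (a + s * (b - a))) with
    ((a' - a) + s' * ((b' - b) - (a' - a)) + (s' - s) * (b - a)) by ring.
  eapply Rle_trans; [apply Rabs_triang|].
  eapply Rle_trans; [apply Rplus_le_compat_r, Rabs_triang|].
  rewrite !Rabs_mult.
  assert (Rabs s' <= 1) by (rewrite Rabs_pos_eq; lra).
  assert (Rabs (b - a) <= 1) by (unfold Rabs; destruct Rcase_abs; lra).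
  assert (Rabs (b' - b - (a' - a)) <= Rabs (b' - b) + Rabs (a' - a)).
  { eapply Rle_trans; [apply Rabs_triang|]. rewrite Rabs_Ropp. lra. }
  pose proof (Rabs_pos s'); pose proof (Rabs_pos (b - a)); pose proof (Rabs_pos (s' - s));
  pose proof (Rabs_pos (b' - b)); pose proof (Rabs_pos (a' - a));
  pose proof (Rabs_pos (b' - b - (a' - a))).
  nra.
Qed.

Lemma Fr_rng (a b s : R) : 0 <= a <= 1 -> 0 <= b <= 1 -> 0 <= s <= 1 -> 0 <= Fr a b s <= 1.
Proof. unfold Fr; intros; nra. Qed.

Lemma Fr_mono (a a' b b' s s' : R) : 0 <= s <= s' -> s' <= 1 -> a <= a' -> b <= b' -> a <= b ->
  Fr a b s <= Fr a' b' s'.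
Proof. unfold Fr; intros; nra. Qed.

Section Square.
Variables (T : Type) (opn : (T -> Prop) -> Prop).

Lemma cont2_precomp (phi : I -> I) (H : I -> I -> T) :
  cont_I phi -> cont2 opn H -> cont2 opn (fun t s => H (phi t) s).
Proof.
  intros cp cH U hU t s hu. destruct (cH U hU _ _ hu) as [e [he He]].
  destruct (cp t e he) as [d [hd Hd]].
  exists (Rmin d e). split; [apply Rmin_pos; lra|].
  intros t' s' ht hs. pose proof (Rmin_l d e); pose proof (Rmin_r d e).
  apply He; [apply Hd|]; lra.
Qed.

Lemma cont2_glue (c : R) (K1 K2 : I -> I -> T) : cont2 opn K1 -> cont2 opn K2 ->
  (forall t s, ival t = c -> K1 t s = K2 t s) ->
  cont2 opn (fun t s => if Rle_dec (ival t) c then K1 t s else K2 t s).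
Proof.
  intros C1 C2 E U hU t s hu.
  destruct (Rtotal_order (ival t) c) as [lt|[eq|gt]].
  - destruct (Rle_dec (ival t) c) in hu; [|lra].
    destruct (C1 U hU _ _ hu) as [e [he He]].
    exists (Rmin e (c - ival t)). split; [apply Rmin_pos; lra|].
    intros t' s' ht hs. pose proof (Rmin_l e (c - ival t)); pose proof (Rmin_r e (c - ival t)).
    destruct (Rle_dec (ival t') c).
    + apply He; lra.
    + exfalso. unfold Rabs in ht; destruct Rcase_abs in ht; lra.
  - destruct (Rle_dec (ival t) c) in hu; [|lra].
    assert (hu2 : U (K2 t s)) by (rewrite <- E; auto).
    destruct (C1 U hU _ _ hu) as [e1 [he1 He1]].
    destruct (C2 U hU _ _ hu2) as [e2 [he2 He2]].
    exists (Rmin e1 e2). split; [apply Rmin_pos; lra|].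
    intros t' s' ht hs. pose proof (Rmin_l e1 e2); pose proof (Rmin_r e1 e2).
    destruct (Rle_dec (ival t') c); [apply He1 | apply He2]; lra.
  - destruct (Rle_dec (ival t) c) in hu; [lra|].
    destruct (C2 U hU _ _ hu) as [e [he He]].
    exists (Rmin e (ival t - c)). split; [apply Rmin_pos; lra|].
    intros t' s' ht hs. pose proof (Rmin_l e (ival t - c)); pose proof (Rmin_r e (ival t - c)).
    destruct (Rle_dec (ival t') c).
    + exfalso. unfold Rabs in ht; destruct Rcase_abs in ht; lra.
    + apply He; lra.
Qed.

End Square.

Section Dimaps.
Variable X : Dspace.

Lemma dip_ext (g g' : I -> pt X) : (forall t, g t = g' t) -> dip X g -> dip X g'.
Proof. intros E H. replace g' with g; auto. apply functional_extensionality; auto. Qed.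

(** A path is a dipath as soon as its restrictions to [0,c] and to [c,1] are:
    it is the concatenation of these restrictions, reparametrized by [split_at c]. *)
Lemma dip_split (P : I -> pt X) (c : R) : 0 <= c <= 1 ->
  dip X (fun v => P (lin 0 c v)) -> dip X (fun v => P (lin c 1 v)) -> dip X P.
Proof.
  intros hc HA HB.
  destruct (Req_dec c 0) as [->|c0].
  { apply (dip_ext _ _ (fun v => f_equal P (lin_01 v)) HB). }
  destruct (Req_dec c 1) as [->|c1].
  { apply (dip_ext _ _ (fun v => f_equal P (lin_01 v)) HA). }
  assert (hc' : 0 < c < 1) by lra.
  set (A := fun v => P (lin 0 c v)) in *.
  set (B := fun v => P (lin c 1 v)) in *.
  assert (AB : A I1 = B I0).
  { unfold A, B; f_equal; apply I_eq; rewrite lin_I1, lin_I0; lra. }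
  apply (dip_ext (fun t => pcat A B (split_at c t))).
  2: { apply dip_reparam; [apply dip_concat; auto | apply split_at_cont | apply split_at_nondecr];
       auto. }
  intro u. pose proof (ival_rng u). unfold split_at. destruct (Rle_dec (ival u) c).
  - assert (w : 0 <= ival u / (2 * c) <= 1/2).
    { split; [apply Rmult_le_pos; [lra | left; apply Rinv_0_lt_compat; lra]|].
      apply (Rmult_le_reg_r (2 * c)); [lra|]. unfold Rdiv; rewrite Rmult_assoc, Rinv_l; lra. }
    rewrite pcat_left; rewrite clamp_val by lra; [|lra].
    unfold A; f_equal; apply I_eq.
    rewrite lin_val by lra. rewrite clamp_val; [field; lra | lra].
  - assert (w : 0 < (ival u - c) / (2 * (1 - c)) <= 1/2).
    { split; [apply Rdiv_lt_0_compat; lra|].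
      apply (Rmult_le_reg_r (2 * (1 - c))); [lra|].
      unfold Rdiv; rewrite Rmult_assoc, Rinv_l; lra. }
    rewrite pcat_right; auto; rewrite clamp_val by lra; [|lra].
    unfold B; f_equal; apply I_eq.
    rewrite lin_val by lra. rewrite clamp_val; [field; lra | lra].
Qed.

(** A map on the square sends dipaths of [vec I x vec I] (pairs of
    reparametrizations) to dipaths. *)
Definition sends_dipaths (H : I -> I -> pt X) : Prop :=
  forall phi psi, cont_I phi -> nondecr phi -> cont_I psi -> nondecr psi ->
    dip X (fun t => H (phi t) (psi t)).

Definition dimap (S : pt X -> Prop) (H : I -> I -> pt X) : Prop :=
  cont2 (opn X) H /\ sends_dipaths H /\ (forall t s, S (H t s)).

Lemma const_dimap (S : pt X -> Prop) (h : I -> pt X) :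
  dip X h -> (forall t, S (h t)) -> dimap S (fun t s => h t).
Proof.
  intros Hd HS. split; [|split]; auto.
  - intros U hU t s hu. destruct (dip_cont X h Hd U hU t hu) as [e [he He]].
    exists e; split; auto.
  - intros phi psi cp np cq nq. apply dip_reparam; auto.
Qed.

Definition hcat (H1 H2 : I -> I -> pt X) (t s : I) : pt X :=
  pcat (fun u => H1 u s) (fun u => H2 u s) t.

(** Dipaths through a horizontal concatenation: cut the dipath where its
    first coordinate crosses [1/2]; each piece runs inside one of the halves. *)
Lemma hcat_dip (H1 H2 : I -> I -> pt X) : sends_dipaths H1 -> sends_dipaths H2 ->
  (forall s, H1 I1 s = H2 I0 s) -> sends_dipaths (hcat H1 H2).
Proof.
  intros D1 D2 E phi psi cp np cq nq.
  destruct (level_crossing phi (1/2) cp) as [c [hc [below above]]].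
  apply (dip_split _ c hc).
  - destruct (Req_dec c 0) as [->|c0].
    { apply (dip_ext (fun _ => hcat H1 H2 (phi (clampI 0)) (psi (clampI 0)))); [|apply dip_const].
      intro v; rewrite lin_same; reflexivity. }
    apply (dip_ext (fun v => H1 (clampI (2 * ival (phi (lin 0 c v)))) (psi (lin 0 c v)))).
    + intro v. unfold hcat. rewrite pcat_left; auto.
      eapply Rle_trans; [|apply below; lra]. apply np.
      rewrite lin_val by lra. rewrite clamp_val by lra. pose proof (ival_rng v); nra.
    + apply (D1 (fun v => clampI (2 * ival (phi (lin 0 c v))))).
      * apply (cont_comp (fun v => phi (lin 0 c v)) (fun t => clampI (2 * ival t))); [|apply double_cont].
        apply cont_comp; [apply lin_cont | auto].
      * apply (nondecr_comp (fun v => phi (lin 0 c v)) (fun t => clampI (2 * ival t))); [|apply double_nondecr].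
        apply nondecr_comp; [apply lin_nondecr; lra | auto].
      * apply cont_comp; [apply lin_cont | auto].
      * apply nondecr_comp; [apply lin_nondecr; lra | auto].
  - destruct (Req_dec c 1) as [->|c1].
    { apply (dip_ext (fun _ => hcat H1 H2 (phi (clampI 1)) (psi (clampI 1)))); [|apply dip_const].
      intro v; rewrite lin_same; reflexivity. }
    apply (dip_ext (fun v => H2 (clampI (2 * ival (phi (lin c 1 v)) - 1)) (psi (lin c 1 v)))).
    + intro v. unfold hcat. rewrite pcat_right; auto.
      eapply Rle_trans; [apply above; lra|]. apply np.
      rewrite lin_val by lra. rewrite clamp_val by lra. pose proof (ival_rng v); nra.
    + apply (D2 (fun v => clampI (2 * ival (phi (lin c 1 v)) - 1))).
      * apply (cont_comp (fun v => phi (lin c 1 v)) (fun t => clampI (2 * ival t - 1))); [|apply double1_cont].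
        apply cont_comp; [apply lin_cont | auto].
      * apply (nondecr_comp (fun v => phi (lin c 1 v)) (fun t => clampI (2 * ival t - 1))); [|apply double1_nondecr].
        apply nondecr_comp; [apply lin_nondecr; lra | auto].
      * apply cont_comp; [apply lin_cont | auto].
      * apply nondecr_comp; [apply lin_nondecr; lra | auto].
Qed.

Lemma hcat_dimap (S : pt X -> Prop) (H1 H2 : I -> I -> pt X) :
  dimap S H1 -> dimap S H2 -> (forall s, H1 I1 s = H2 I0 s) -> dimap S (hcat H1 H2).
Proof.
  intros [C1 [D1 S1]] [C2 [D2 S2]] E. split; [|split].
  - apply (cont2_glue _ _ (1/2) (fun t s => H1 (clampI (2 * ival t)) s)
                                (fun t s => H2 (clampI (2 * ival t - 1)) s)).
    + apply (cont2_precomp _ _ _ H1 double_cont C1).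
    + apply (cont2_precomp _ _ _ H2 double1_cont C2).
    + intros t s ht. rewrite ht, (clamp_ge1 (2 * (1/2))), (clamp_le0 (2 * (1/2) - 1)) by lra.
      apply E.
  - apply hcat_dip; auto.
  - intros t s. apply (pcat_in (fun z => S z)); auto.
Qed.

Definition line_htpy (g : I -> pt X) (r1 r2 : I -> I) (t s : I) : pt X :=
  g (clampI (Fr (ival (r1 t)) (ival (r2 t)) (ival s))).

Lemma line_htpy_dimap (S : pt X -> Prop) (g : I -> pt X) (r1 r2 : I -> I) :
  dip X g -> (forall t, S (g t)) ->
  cont_I r1 -> nondecr r1 -> cont_I r2 -> nondecr r2 ->
  (forall t, ival (r1 t) <= ival (r2 t)) -> dimap S (line_htpy g r1 r2).
Proof.
  intros Hd HS c1 n1 c2 n2 le. unfold line_htpy. split; [|split]; auto.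
  - intros U hU t s hu.
    destruct (dip_cont X g Hd U hU _ hu) as [e [he He]].
    destruct (c1 t (e/4)) as [d1 [hd1 D1]]; [lra|].
    destruct (c2 t (e/4)) as [d2 [hd2 D2]]; [lra|].
    exists (Rmin (e/4) (Rmin d1 d2)). split; [repeat apply Rmin_pos; lra|].
    intros t' s' ht hs.
    pose proof (Rmin_l (e/4) (Rmin d1 d2)); pose proof (Rmin_r (e/4) (Rmin d1 d2));
    pose proof (Rmin_l d1 d2); pose proof (Rmin_r d1 d2).
    apply He. eapply Rle_lt_trans; [apply clamp_lip|].
    eapply Rle_lt_trans; [apply Fr_est; apply ival_rng|].
    assert (Rabs (ival (r1 t') - ival (r1 t)) < e/4) by (apply D1; lra).
    assert (Rabs (ival (r2 t') - ival (r2 t)) < e/4) by (apply D2; lra).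
    lra.
  - intros phi psi cp np cq nq.
    apply (dip_reparam X g
             (fun u => clampI (Fr (ival (r1 (phi u))) (ival (r2 (phi u))) (ival (psi u))))); auto.
    + apply cont_clamp. intros t e he.
      destruct (cont_comp _ _ cp c1 t (e/4)) as [d1 [hd1 D1]]; [lra|].
      destruct (cont_comp _ _ cp c2 t (e/4)) as [d2 [hd2 D2]]; [lra|].
      destruct (cq t (e/4)) as [d3 [hd3 D3]]; [lra|].
      exists (Rmin d1 (Rmin d2 d3)). split; [repeat apply Rmin_pos; lra|].
      intros s hs.
      pose proof (Rmin_l d1 (Rmin d2 d3)); pose proof (Rmin_r d1 (Rmin d2 d3));
      pose proof (Rmin_l d2 d3); pose proof (Rmin_r d2 d3).
      eapply Rle_lt_trans; [apply Fr_est; apply ival_rng|].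
      assert (Rabs (ival (r1 (phi s)) - ival (r1 (phi t))) < e/4) by (apply D1; lra).
      assert (Rabs (ival (r2 (phi s)) - ival (r2 (phi t))) < e/4) by (apply D2; lra).
      assert (Rabs (ival (psi s) - ival (psi t)) < e/4) by (apply D3; lra).
      lra.
    + intros s t hst. apply clamp_mono. apply Fr_mono; auto.
      * pose proof (ival_rng (psi s)); pose proof (nq s t hst); lra.
      * apply ival_rng.
Qed.

Lemma line_htpy_dhtpy (S : pt X -> Prop) (g : I -> pt X) (r1 r2 : I -> I) :
  dip X g -> (forall t, S (g t)) ->
  cont_I r1 -> nondecr r1 -> cont_I r2 -> nondecr r2 ->
  (forall t, ival (r1 t) <= ival (r2 t)) -> ival (r1 I0) = ival (r2 I0) ->
  ival (r1 I1) = ival (r2 I1) ->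
  dhtpy X S (fun t => g (r1 t)) (fun t => g (r2 t)).
Proof.
  intros Hd HS c1 n1 c2 n2 le e0 e1.
  destruct (line_htpy_dimap S g r1 r2) as [A [B C]]; auto.
  exists (line_htpy g r1 r2). unfold line_htpy. split; [auto|split; [auto|split; [auto|]]].
  split; [|split; [|split]]; intros; f_equal; apply I_eq; rewrite clamp_val; unfold Fr; simpl;
    try (rewrite ?e0, ?e1; ring); apply Fr_rng; try apply ival_rng; simpl; lra.
Qed.

End Dimaps.

Section FundamentalCategory.
Variables (X : Dspace) (S : pt X -> Prop).

Lemma dheq_sym (g g' : I -> pt X) : dheq X S g g' -> dheq X S g' g.
Proof. apply rst_sym. Qed.

Lemma dheq_trans (g g' g'' : I -> pt X) : dheq X S g g' -> dheq X S g' g'' -> dheq X S g g''.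
Proof. apply rst_trans. Qed.

Lemma dheq_end (g g' : I -> pt X) : dheq X S g g' -> g I0 = g' I0 /\ g I1 = g' I1.
Proof.
  induction 1 as [g g' [H [_ [_ [_ [h0 [h1 [e0 e1]]]]]]] | | g g' _ [] | g g' g'' _ [] _ []].
  - split; [rewrite <- h1, e0 | rewrite <- h1, e1]; auto.
  - auto.
  - auto.
  - split; congruence.
Qed.

Lemma dheq_mono (S' : pt X -> Prop) (g g' : I -> pt X) :
  (forall x, S x -> S' x) -> dheq X S g g' -> dheq X S' g g'.
Proof.
  intros HS; induction 1.
  - apply rst_step. destruct H as [H [a [b [c d]]]]. exists H; repeat split; auto; apply d.
  - apply rst_refl.
  - apply rst_sym; auto.
  - eapply rst_trans; eauto.
Qed.

Lemma dhtpy_cat_l (g g' h : I -> pt X) : dhtpy X S g g' -> dip X h -> (forall t, S (h t)) ->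
  g I1 = h I0 -> dhtpy X S (pcat g h) (pcat g' h).
Proof.
  intros [H [cH [dH [sH [h0 [h1 [e0 e1]]]]]]] Hh HS E.
  destruct (hcat_dimap X S H (fun t s => h t) (conj cH (conj dH sH)) (const_dimap X S h Hh HS))
    as [A [B C]].
  { intros s; rewrite e1; auto. }
  exists (hcat X H (fun t s => h t)). unfold hcat.
  repeat split; auto; intros.
  - unfold pcat; destruct Rle_dec; auto.
  - unfold pcat; destruct Rle_dec; auto.
  - rewrite !pcat_I0; auto.
  - rewrite !pcat_I1; auto.
Qed.

Lemma dhtpy_cat_r (g h h' : I -> pt X) : dhtpy X S h h' -> dip X g -> (forall t, S (g t)) ->
  g I1 = h I0 -> dhtpy X S (pcat g h) (pcat g h').
Proof.
  intros [H [cH [dH [sH [h0 [h1 [e0 e1]]]]]]] Hg HS E.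
  destruct (hcat_dimap X S (fun t s => g t) H (const_dimap X S g Hg HS) (conj cH (conj dH sH)))
    as [A [B C]].
  { intros s; rewrite e0; auto. }
  exists (hcat X (fun t s => g t) H). unfold hcat.
  repeat split; auto; intros.
  - unfold pcat; destruct Rle_dec; auto.
  - unfold pcat; destruct Rle_dec; auto.
  - rewrite !pcat_I0; auto.
  - rewrite !pcat_I1; auto.
Qed.

Lemma dheq_cat_l (g g' h : I -> pt X) (x y z : pt X) : dheq X S g g' ->
  dpath X S x y g -> dpath X S y z h -> dheq X S (pcat g h) (pcat g' h).
Proof.
  intros Hg [_ [_ [_ g1]]] [Hh [HS [h0 _]]].
  assert (E : g I1 = h I0) by congruence. clear g1 h0. revert E.
  induction Hg as [g g' Hs | | g g' Hg IH | g g' g'' Hg1 IH1 Hg2 IH2].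
  - intros E; apply rst_step, dhtpy_cat_l; auto.
  - intros _; apply rst_refl.
  - intros E; apply rst_sym, IH. destruct (dheq_end _ _ Hg); congruence.
  - intros E; eapply rst_trans; [apply IH1; auto | apply IH2].
    destruct (dheq_end _ _ Hg1); congruence.
Qed.

Lemma dheq_cat_r (g h h' : I -> pt X) (x y z : pt X) : dheq X S h h' ->
  dpath X S x y g -> dpath X S y z h -> dheq X S (pcat g h) (pcat g h').
Proof.
  intros Hh [Hg [HS [_ g1]]] [_ [_ [h0 _]]].
  assert (E : g I1 = h I0) by congruence. clear g1 h0. revert E.
  induction Hh as [h h' Hs | | h h' Hh IH | h h' h'' Hh1 IH1 Hh2 IH2].
  - intros E; apply rst_step, dhtpy_cat_r; auto.
  - intros _; apply rst_refl.
  - intros E; apply rst_sym, IH. destruct (dheq_end _ _ Hh); congruence.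
  - intros E; eapply rst_trans; [apply IH1; auto | apply IH2].
    destruct (dheq_end _ _ Hh1); congruence.
Qed.

Lemma dpath_cat (f g : I -> pt X) (x y z : pt X) :
  dpath X S x y f -> dpath X S y z g -> dpath X S x z (pcat f g).
Proof.
  intros [df [sf [f0 f1]]] [dg [sg [g0 g1]]].
  split; [apply dip_concat; congruence | split; [apply pcat_in; auto |]].
  rewrite pcat_I0, pcat_I1; auto.
Qed.

(** Reparametrization invariance: [g] and [g o rho] are linked by two
    straight-line homotopies through [g o max rho id], which lies above both. *)
Lemma dheq_reparam (g : I -> pt X) (rho : I -> I) : dip X g -> (forall t, S (g t)) ->
  cont_I rho -> nondecr rho -> ival (rho I0) = 0 -> ival (rho I1) = 1 ->
  dheq X S g (fun t => g (rho t)).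
Proof.
  intros Hd HS cr nr e0 e1.
  set (m := fun t => clampI (Rmax (ival (rho t)) (ival t))).
  assert (cm : cont_I m) by (apply cont_clamp, contR_max; [apply cr | apply contR_ival]).
  assert (nm : nondecr m).
  { intros s t h; apply clamp_mono. pose proof (nr s t h).
    unfold Rmax; repeat destruct Rle_dec; lra. }
  assert (mv : forall t, ival (m t) = Rmax (ival (rho t)) (ival t)).
  { intro t; unfold m; apply clamp_val. pose proof (ival_rng (rho t)); pose proof (ival_rng t).
    unfold Rmax; destruct Rle_dec; lra. }
  assert (m0 : ival (m I0) = 0) by (rewrite mv, e0; simpl; unfold Rmax; destruct Rle_dec; lra).
  assert (m1 : ival (m I1) = 1) by (rewrite mv, e1; simpl; unfold Rmax; destruct Rle_dec; lra).
  apply dheq_trans with (fun t => g (m t)).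
  - apply rst_step, (line_htpy_dhtpy X S g (fun v => v) m); auto.
    + apply id_cont.
    + apply id_nondecr.
    + intro t; rewrite mv; apply Rmax_r.
  - apply rst_sym, rst_step, (line_htpy_dhtpy X S g rho m); auto; [|congruence|congruence].
    intro t; rewrite mv; apply Rmax_l.
Qed.

Lemma dheq_unit_r (g : I -> pt X) (x y : pt X) : dpath X S x y g ->
  dheq X S (pcat g (fun _ => y)) g.
Proof.
  intros [Hd [HS [_ <-]]]. apply dheq_sym.
  change (pcat g (fun _ => g I1)) with (pcat (fun u => g u) (fun _ => g I1)).
  rewrite (pcat_comp g (fun v => v) (fun _ => I1)). apply dheq_reparam; auto.
  - apply pcat_cont; [apply id_cont | apply const_cont | reflexivity].
  - apply pcat_nondecr; [apply id_nondecr | apply const_nondecr | simpl; lra].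
  - rewrite pcat_I0; reflexivity.
  - rewrite pcat_I1; reflexivity.
Qed.

Lemma dheq_unit_l (g : I -> pt X) (x y : pt X) : dpath X S x y g ->
  dheq X S (pcat (fun _ => x) g) g.
Proof.
  intros [Hd [HS [<- _]]]. apply dheq_sym.
  change (pcat (fun _ => g I0) g) with (pcat (fun _ => g I0) (fun u => g u)).
  rewrite (pcat_comp g (fun _ => I0) (fun v => v)). apply dheq_reparam; auto.
  - apply pcat_cont; [apply const_cont | apply id_cont | reflexivity].
  - apply pcat_nondecr; [apply const_nondecr | apply id_nondecr | simpl; lra].
  - rewrite pcat_I0; reflexivity.
  - rewrite pcat_I1; reflexivity.
Qed.

(** Associativity: [(f g) h] is [f (g h)] reparametrized by the piecewise
    affine map with breakpoints [1/4, 1/2] sent to [1/2, 3/4]. *)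
Lemma dheq_assoc (f g h : I -> pt X) (x y z w : pt X) :
  dpath X S x y f -> dpath X S y z g -> dpath X S z w h ->
  dheq X S (pcat (pcat f g) h) (pcat f (pcat g h)).
Proof.
  intros [df [sf [_ f1]]] [dg [sg [g0 g1]]] [dh [sh [h0 _]]].
  assert (e1 : f I1 = g I0) by congruence. assert (e2 : g I1 = h I0) by congruence.
  set (K := pcat f (pcat g h)).
  assert (dK : dip X K) by (apply dip_concat; [| apply dip_concat |]; rewrite ?pcat_I0; auto).
  assert (sK : forall t, S (K t)) by (apply pcat_in; auto; apply pcat_in; auto).
  set (a1 := lin 0 (1/2)). set (a2 := lin (1/2) (3/4)). set (a3 := lin (3/4) 1).
  assert (Ef : forall u, f u = K (a1 u)).
  { intro u. unfold K, a1. pose proof (ival_rng u).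
    rewrite pcat_left by (rewrite lin_val; lra). f_equal. apply I_eq.
    rewrite lin_val, clamp_val by lra; lra. }
  assert (Eg : forall u, g u = K (a2 u)).
  { intro u. unfold K, a2, pcat. rewrite lin_val by lra. pose proof (ival_rng u).
    destruct Rle_dec.
    - assert (u = I0) by (apply I_eq; simpl; lra). subst u.
      rewrite clamp_ge1 by lra. auto.
    - rewrite clamp_val by lra. destruct Rle_dec; [|lra].
      f_equal. apply I_eq. rewrite clamp_val; lra. }
  assert (Eh : forall u, h u = K (a3 u)).
  { intro u. unfold K, a3, pcat. rewrite lin_val by lra. pose proof (ival_rng u).
    destruct Rle_dec; [lra|]. rewrite clamp_val by lra. destruct Rle_dec.
    - assert (u = I0) by (apply I_eq; simpl; lra). subst u.
      rewrite clamp_ge1 by lra. auto.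
    - f_equal. apply I_eq. rewrite clamp_val; lra. }
  assert (EQ : pcat (pcat f g) h = fun t => K (pcat (pcat a1 a2) a3 t)).
  { rewrite <- !pcat_comp. f_equal; [f_equal|]; apply functional_extensionality; auto. }
  rewrite EQ. apply dheq_sym. apply dheq_reparam; auto.
  - apply pcat_cont; [apply pcat_cont; [apply lin_cont | apply lin_cont |] | apply lin_cont |].
    + unfold a1, a2; rewrite lin_I1, lin_I0; lra.
    + rewrite pcat_I1; unfold a2, a3; rewrite lin_I1, lin_I0; lra.
  - apply pcat_nondecr; [apply pcat_nondecr; [apply lin_nondecr | apply lin_nondecr |]
                        | apply lin_nondecr |]; try lra.
    + unfold a1, a2; rewrite lin_I1, lin_I0; lra.
    + rewrite pcat_I1; unfold a2, a3; rewrite lin_I1, lin_I0; lra.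
  - rewrite !pcat_I0; unfold a1; rewrite lin_I0; lra.
  - rewrite pcat_I1; unfold a3; rewrite lin_I1; lra.
Qed.

End FundamentalCategory.

Lemma cats_S {T : Type} (f : nat -> I -> T) (m : nat) :
  (1 <= m)%nat -> cats f (S m) = pcat (cats f m) (f (S m)).
Proof. intros h; destruct m; [lia | reflexivity]. Qed.

Lemma cats_comp {T : Type} (k : I -> T) (f : nat -> I -> I) (m : nat) :
  cats (fun i u => k (f i u)) m = fun t => k (cats f m t).
Proof.
  induction m as [|m IH]; [reflexivity|].
  destruct m; [reflexivity|]. rewrite !cats_S by lia. rewrite IH. apply pcat_comp.
Qed.

Lemma cats_dpath (X : Dspace) (Y : pt X -> Prop) (f : nat -> I -> pt X) (z : nat -> pt X)
  (n : nat) : (forall i, (1 <= i <= n)%nat -> dpath X Y (z (i - 1)%nat) (z i) (f i)) ->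
  forall m, (1 <= m <= n)%nat -> dpath X Y (z 0%nat) (z m) (cats f m).
Proof.
  intros Hf m. induction m as [|m IH]; intros hm; [lia|].
  destruct (Nat.eq_dec m 0) as [->|nz]; [apply (Hf 1%nat); lia|].
  rewrite cats_S by lia. apply dpath_cat with (y := z m); [apply IH; lia|].
  replace m with (S m - 1)%nat at 1 by lia. apply Hf; lia.
Qed.

Lemma dpath_mono (X : Dspace) (S S' : pt X -> Prop) (x y : pt X) (g : I -> pt X) :
  (forall z, S z -> S' z) -> dpath X S x y g -> dpath X S' x y g.
Proof. intros HS [a [b [c d]]]; repeat split; auto. Qed.

Section Partition.
Variables (t : nat -> R) (n : nat).
Hypothesis t_step : forall i, (i < n)%nat -> t i <= t (S i).
Hypothesis t_0 : t 0%nat = 0.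
Hypothesis t_n : t n = 1.

Lemma partition_mono (i j : nat) : (i <= j <= n)%nat -> t i <= t j.
Proof.
  induction j as [|j IH]; intros h.
  - replace i with 0%nat by lia; lra.
  - destruct (Nat.eq_dec i (S j)) as [->|ne]; [lra|].
    eapply Rle_trans; [apply IH; lia | apply t_step; lia].
Qed.

Lemma partition_range (i : nat) : (i <= n)%nat -> 0 <= t i <= 1.
Proof. intros h; split; [rewrite <- t_0 | rewrite <- t_n]; apply partition_mono; lia. Qed.

Definition piece (i : nat) : I -> I := lin (t (i - 1)%nat) (t i).

Lemma piece_spec (i : nat) : (1 <= i <= n)%nat ->
  cont_I (piece i) /\ nondecr (piece i) /\
  ival (piece i I0) = t (i - 1)%nat /\ ival (piece i I1) = t i /\
  forall u, t (i - 1)%nat <= ival (piece i u) <= t i.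
Proof.
  intros hi. assert (t (i - 1)%nat <= t i) by (apply partition_mono; lia).
  assert (0 <= t (i - 1)%nat <= 1) by (apply partition_range; lia).
  assert (0 <= t i <= 1) by (apply partition_range; lia).
  unfold piece; split; [apply lin_cont | split; [apply lin_nondecr; auto |]].
  rewrite lin_I0, lin_I1 by lra. split; [auto | split; [auto |]].
  intro u; rewrite lin_val by lra. pose proof (ival_rng u); nra.
Qed.

Lemma cats_pieces (m : nat) : (1 <= m <= n)%nat ->
  cont_I (cats piece m) /\ nondecr (cats piece m) /\
  ival (cats piece m I0) = t 0%nat /\ ival (cats piece m I1) = t m.
Proof.
  induction m as [|m IH]; intros hm; [lia|].
  destruct (Nat.eq_dec m 0) as [->|nz].
  - destruct (piece_spec 1%nat) as [c [nd [p0 [p1 _]]]]; [lia | auto].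
  - destruct IH as [c [nd [p0 p1]]]; [lia|].
    destruct (piece_spec (S m)) as [c' [nd' [p0' [p1' _]]]]; [lia|].
    replace (S m - 1)%nat with m in p0' by lia.
    rewrite cats_S by lia. split; [|split; [|split]].
    + apply pcat_cont; auto; congruence.
    + apply pcat_nondecr; auto; lra.
    + rewrite pcat_I0; auto.
    + rewrite pcat_I1; auto.
Qed.

End Partition.

Section FutureRetract.
Variables (X : Dspace) (S T : pt X -> Prop) (Pob : pt X -> pt X)
  (Pmor : (I -> pt X) -> (I -> pt X)) (eta : pt X -> I -> pt X).
Hypothesis hR : IsFutureRetract X S T Pob Pmor eta.

Lemma retract_ob (x : pt X) : S x -> T (Pob x).
Proof. apply hR. Qed.

Lemma retract_mor (x y : pt X) (g : I -> pt X) :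
  dpath X S x y g -> dpath X S (Pob x) (Pob y) (Pmor g).
Proof. apply hR. Qed.

Lemma retract_unit_path (x : pt X) : S x -> dpath X S x (Pob x) (eta x).
Proof. apply hR. Qed.

Lemma retract_unit_natural (x y : pt X) (g : I -> pt X) :
  dpath X S x y g -> dheq X S (pcat g (eta y)) (pcat (eta x) (Pmor g)).
Proof. apply hR. Qed.

Lemma retract_unit_trivial (a : pt X) : T a -> dheq X S (eta a) (fun _ => a).
Proof. apply hR. Qed.

(** [P] is the identity on objects of [T]: [eta a : a -> P a] is homotopic
    to the constant path at [a], so both end at the same point. *)
Lemma retract_fixes (a : pt X) : S a -> T a -> Pob a = a.
Proof.
  intros hS hT. destruct (retract_unit_path a hS) as [_ [_ [_ e1]]].
  destruct (dheq_end X S _ _ (retract_unit_trivial a hT)) as [_ e2]. congruence.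
Qed.

End FutureRetract.

Section VanKampen.
Variables (X : Dspace) (Xk Ak : nat -> pt X -> Prop) (Pob : nat -> pt X -> pt X)
  (Pmor : nat -> (I -> pt X) -> (I -> pt X)) (eta : nat -> pt X -> I -> pt X).
Hypothesis hX0 : forall x, Xk 0%nat x <-> Xk 1%nat x /\ Xk 2%nat x.
Hypothesis hAsub : forall k x, (k <= 2)%nat -> Ak k x -> Xk k x.
Hypothesis hP : Compatible X Xk Ak Pob Pmor eta.

Local Notation Xall := (fun _ : pt X => True).

Lemma retract_side (k : nat) : (k = 1 \/ k = 2)%nat ->
  IsFutureRetract X (Xk k) (Ak k) (Pob k) (Pmor k) (eta k).
Proof. intros hk; apply (proj1 hP); lia. Qed.

Lemma in_X0 (k k' : nat) (x : pt X) : (k = 1 \/ k = 2)%nat -> (k' = 1 \/ k' = 2)%nat ->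
  k <> k' -> Xk k x -> Xk k' x -> Xk 0%nat x.
Proof. intros hk hk' ne h h'; apply hX0; destruct hk as [-> | ->], hk' as [-> | ->]; tauto. Qed.

(** By compatibility, [P_1] and [P_2] agree (with [P_0]) on [X_0], and so do
    their units. *)
Lemma Pob_agree (k k' : nat) (x : pt X) : (k = 1 \/ k = 2)%nat -> (k' = 1 \/ k' = 2)%nat ->
  Xk k x -> Xk k' x -> Pob k x = Pob k' x.
Proof.
  intros hk hk' h h'. destruct (Nat.eq_dec k k') as [->|ne]; auto.
  assert (h0 := in_X0 k k' x hk hk' ne h h').
  rewrite (proj1 (proj2 hP k hk) x h0), (proj1 (proj2 hP k' hk') x h0). reflexivity.
Qed.

Lemma eta_agree (k k' : nat) (x : pt X) : (k = 1 \/ k = 2)%nat -> (k' = 1 \/ k' = 2)%nat ->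
  Xk k x -> Xk k' x -> dheq X Xall (eta k x) (eta k' x).
Proof.
  intros hk hk' h h'. destruct (Nat.eq_dec k k') as [->|ne]; [apply rst_refl|].
  assert (h0 := in_X0 k k' x hk hk' ne h h').
  apply dheq_trans with (eta 0%nat x).
  - apply dheq_sym, (dheq_mono X (Xk k)); auto. apply (proj2 (proj2 (proj2 hP k hk)) x h0).
  - apply (dheq_mono X (Xk k')); auto. apply (proj2 (proj2 (proj2 hP k' hk')) x h0).
Qed.

Lemma Pob_fix (k : nat) (x : pt X) : (k = 1 \/ k = 2)%nat -> Xk k x ->
  (Ak 1%nat x \/ Ak 2%nat x) -> Pob k x = x.
Proof.
  intros hk hx hA.
  assert (HJ : exists j, (j = 1 \/ j = 2)%nat /\ Ak j x) by (destruct hA; eauto).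
  destruct HJ as [j [hj hAj]]. assert (hxj : Xk j x) by (apply hAsub; auto; lia).
  rewrite (Pob_agree k j x hk hj hx hxj). exact (retract_fixes _ _ _ _ _ _ (retract_side j hj) x hxj hAj).
Qed.

Lemma eta_fix (k : nat) (x : pt X) : (k = 1 \/ k = 2)%nat -> Xk k x ->
  (Ak 1%nat x \/ Ak 2%nat x) -> dheq X Xall (eta k x) (fun _ => x).
Proof.
  intros hk hx hA.
  assert (HJ : exists j, (j = 1 \/ j = 2)%nat /\ Ak j x) by (destruct hA; eauto).
  destruct HJ as [j [hj hAj]]. assert (hxj : Xk j x) by (apply hAsub; auto; lia).
  apply dheq_trans with (eta j x); [apply eta_agree; auto|].
  apply (dheq_mono X (Xk j)); auto. exact (retract_unit_trivial _ _ _ _ _ _ (retract_side j hj) x hAj).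
Qed.

Lemma eta_dpath (k : nat) (x : pt X) : (k = 1 \/ k = 2)%nat -> Xk k x ->
  dpath X Xall x (Pob k x) (eta k x).
Proof. intros hk hx. apply (dpath_mono X (Xk k)); auto. apply (retract_unit_path _ _ _ _ _ _ (retract_side k hk)); auto. Qed.


Section Chain.
Variables (x : nat -> pt X) (kk : nat -> nat) (g : nat -> I -> pt X) (n : nat).
Hypothesis hkk : forall i, (1 <= i <= n)%nat -> (kk i = 1 \/ kk i = 2)%nat.
Hypothesis hg : forall i, (1 <= i <= n)%nat -> dpath X (Xk (kk i)) (x (i - 1)%nat) (x i) (g i).

Definition ret_pt (i : nat) : pt X := Pob (kk (Nat.max 1 i)) (x i).
Definition ret_piece (i : nat) : I -> pt X := Pmor (kk i) (g i).

Lemma chain_in (i : nat) : (1 <= i <= n)%nat -> Xk (kk i) (x (i - 1)%nat) /\ Xk (kk i) (x i).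
Proof. intros hi. destruct (hg i hi) as [_ [hS [<- <-]]]. auto. Qed.

Lemma ret_pt_cur (i : nat) : (1 <= i)%nat -> ret_pt i = Pob (kk i) (x i).
Proof. intros hi. unfold ret_pt. rewrite Nat.max_r by lia. reflexivity. Qed.

Lemma ret_pt_prev (i : nat) : (1 <= i <= n)%nat -> Pob (kk i) (x (i - 1)%nat) = ret_pt (i - 1).
Proof.
  intros hi. destruct (Nat.eq_dec i 1) as [->|ne]; [reflexivity|].
  rewrite ret_pt_cur by lia. apply Pob_agree; [apply hkk; lia | apply hkk; lia | apply chain_in; lia|].
  apply (chain_in (i - 1)); lia.
Qed.

Lemma ret_pt_fix (i : nat) : (1 <= n)%nat -> (i <= n)%nat ->
  (Ak 1%nat (x i) \/ Ak 2%nat (x i)) -> ret_pt i = x i.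
Proof.
  intros hn hi hA. unfold ret_pt. apply Pob_fix; auto.
  - apply hkk; lia.
  - destruct i as [|i]; [apply (chain_in 1%nat); lia|]. apply chain_in; lia.
Qed.

Lemma ret_piece_spec (i : nat) : (1 <= i <= n)%nat ->
  Ak (kk i) (ret_pt (i - 1)%nat) /\ Ak (kk i) (ret_pt i) /\
  dpath X (Xk (kk i)) (ret_pt (i - 1)%nat) (ret_pt i) (ret_piece i).
Proof.
  intros hi. assert (hR := retract_side (kk i) (hkk i hi)).
  destruct (chain_in i hi) as [h0 h1].
  rewrite <- ret_pt_prev, ret_pt_cur by lia.
  split; [|split]; [apply (retract_ob _ _ _ _ _ _ hR) .. | apply (retract_mor _ _ _ _ _ _ hR)]; auto.
Qed.

Lemma chain_dpath (m : nat) : (1 <= m <= n)%nat -> dpath X Xall (x 0%nat) (x m) (cats g m).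
Proof.
  apply (cats_dpath X Xall g x n). intros i hi. apply (dpath_mono X (Xk (kk i))); auto.
Qed.

Lemma ret_chain_dpath (m : nat) : (1 <= m <= n)%nat ->
  dpath X Xall (ret_pt 0%nat) (ret_pt m) (cats ret_piece m).
Proof.
  apply (cats_dpath X Xall ret_piece ret_pt n). intros i hi.
  apply (dpath_mono X (Xk (kk i))); auto. apply ret_piece_spec; auto.
Qed.

(** The pieces, indexed by [S m] to avoid truncated subtraction. *)
Lemma piece_S (m : nat) : (m < n)%nat -> dpath X (Xk (kk (S m))) (x m) (x (S m)) (g (S m)).
Proof.
  intros hm. pose proof (hg (S m) ltac:(lia)) as H.
  replace (S m - 1)%nat with m in H by lia. exact H.
Qed.

Lemma start_in (m : nat) : (m < n)%nat -> Xk (kk (S m)) (x m).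
Proof. intros hm. destruct (piece_S m hm) as [_ [hS [<- _]]]. apply hS. Qed.

Lemma piece_dpath (m : nat) : (m < n)%nat -> dpath X Xall (x m) (x (S m)) (g (S m)).
Proof. intros hm. apply (dpath_mono X (Xk (kk (S m)))); auto. apply piece_S, hm. Qed.

Lemma ret_piece_dpath (m : nat) : (m < n)%nat ->
  dpath X Xall (ret_pt m) (ret_pt (S m)) (ret_piece (S m)).
Proof.
  intros hm. apply (dpath_mono X (Xk (kk (S m)))); auto.
  pose proof (ret_piece_spec (S m) ltac:(lia)) as [_ [_ H]].
  replace (S m - 1)%nat with m in H by lia. exact H.
Qed.

Lemma unit_after (m : nat) : (1 <= m <= n)%nat ->
  dpath X Xall (x m) (ret_pt m) (eta (kk m) (x m)).
Proof. intros hm. rewrite ret_pt_cur by lia. apply eta_dpath; [apply hkk | apply chain_in]; lia. Qed.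

Lemma unit_before (m : nat) : (m < n)%nat ->
  dpath X Xall (x m) (ret_pt m) (eta (kk (S m)) (x m)).
Proof.
  intros hm. pose proof (ret_pt_prev (S m) ltac:(lia)) as P.
  replace (S m - 1)%nat with m in P by lia.
  rewrite <- P. apply eta_dpath; [apply hkk; lia | apply start_in, hm].
Qed.

Lemma piece_natural (m : nat) : (m < n)%nat ->
  dheq X Xall (pcat (g (S m)) (eta (kk (S m)) (x (S m))))
              (pcat (eta (kk (S m)) (x m)) (ret_piece (S m))).
Proof.
  intros hm. apply (dheq_mono X (Xk (kk (S m)))); auto.
  apply (retract_unit_natural _ _ _ _ _ _ (retract_side _ (hkk (S m) ltac:(lia)))).
  apply piece_S, hm.
Qed.

(** Telescoping the naturality squares:
    [g_1 ... g_m . eta(x_m) = eta(x_0) . P(g_1) ... P(g_m)], where consecutive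
    units [eta_(kk m) (x m)] and [eta_(kk (m+1)) (x m)] agree by compatibility. *)
Lemma telescope (m : nat) : (1 <= m <= n)%nat ->
  dheq X Xall (pcat (cats g m) (eta (kk m) (x m)))
              (pcat (eta (kk 1%nat) (x 0%nat)) (cats ret_piece m)).
Proof.
  induction m as [|m IH]; intros hm; [lia|].
  destruct (Nat.eq_dec m 0) as [->|nz]; [apply piece_natural; lia|].
  specialize (IH ltac:(lia)).
  assert (C := chain_dpath m ltac:(lia)).
  assert (D := ret_chain_dpath m ltac:(lia)).
  assert (G := piece_dpath m ltac:(lia)).
  assert (A' := ret_piece_dpath m ltac:(lia)).
  assert (E' := unit_after (S m) ltac:(lia)).
  assert (Emid := unit_before m ltac:(lia)).
  assert (Em := unit_after m ltac:(lia)).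
  assert (E0 := unit_before 0 ltac:(lia)).
  assert (swap : dheq X Xall (eta (kk (S m)) (x m)) (eta (kk m) (x m))).
  { apply eta_agree; [apply hkk; lia | apply hkk; lia | apply start_in; lia |].
    apply (proj2 (chain_in m ltac:(lia))). }
  rewrite !cats_S by lia.
  (* (C G) E' = C (G E') = C (Emid A') = (C Emid) A' = (C Em) A' = (E0 D) A' = E0 (D A') *)
  eapply dheq_trans; [exact (dheq_assoc X Xall _ _ _ _ _ _ _ C G E')|].
  eapply dheq_trans;
    [exact (dheq_cat_r X Xall _ _ _ _ _ _ (piece_natural m ltac:(lia)) C
              (dpath_cat X Xall _ _ _ _ _ G E'))|].
  eapply dheq_trans; [exact (dheq_sym X Xall _ _ (dheq_assoc X Xall _ _ _ _ _ _ _ C Emid A'))|].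
  eapply dheq_trans;
    [exact (dheq_cat_l X Xall _ _ _ _ _ _ (dheq_cat_r X Xall _ _ _ _ _ _ swap C Emid)
              (dpath_cat X Xall _ _ _ _ _ C Emid) A')|].
  eapply dheq_trans; [exact (dheq_cat_l X Xall _ _ _ _ _ _ IH (dpath_cat X Xall _ _ _ _ _ C Em) A')|].
  exact (dheq_assoc X Xall _ _ _ _ _ _ _ E0 D A').
Qed.

(** If the chain starts and ends in [A], it is equal in [pi1(X)] to its
    retracted chain: compose the telescoping identity with the trivial units
    at both ends. *)
Lemma chain_retract_eq : (1 <= n)%nat ->
  (Ak 1%nat (x 0%nat) \/ Ak 2%nat (x 0%nat)) -> (Ak 1%nat (x n) \/ Ak 2%nat (x n)) ->
  dheq X Xall (cats g n) (cats ret_piece n).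
Proof.
  intros hn hA0 hAn.
  assert (C := chain_dpath n ltac:(lia)).
  assert (D := ret_chain_dpath n ltac:(lia)).
  assert (En := unit_after n ltac:(lia)).
  assert (E0 := unit_before 0 ltac:(lia)).
  rewrite (ret_pt_fix 0%nat) in D, E0 by (auto; lia).
  rewrite (ret_pt_fix n) in D, En by (auto; lia).
  eapply dheq_trans; [apply dheq_sym, (dheq_unit_r X Xall _ _ _ C)|].
  assert (trivn : dheq X Xall (eta (kk n) (x n)) (fun _ => x n)).
  { apply eta_fix; [apply hkk; lia | apply (chain_in n); lia | auto]. }
  eapply dheq_trans; [exact (dheq_sym X Xall _ _ (dheq_cat_r X Xall _ _ _ _ _ _ trivn C En))|].
  eapply dheq_trans; [apply telescope; lia|].
  eapply dheq_trans; [|apply (dheq_unit_l X Xall _ _ _ D)].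
  assert (triv0 : dheq X Xall (eta (kk 1%nat) (x 0%nat)) (fun _ => x 0%nat)).
  { apply eta_fix; [apply hkk; lia | apply (chain_in 1%nat); lia | auto]. }
  exact (dheq_cat_l X Xall _ _ _ _ _ _ triv0 E0 D).
Qed.

Lemma retract_chain : (1 <= n)%nat ->
  (Ak 1%nat (x 0%nat) \/ Ak 2%nat (x 0%nat)) -> (Ak 1%nat (x n) \/ Ak 2%nat (x n)) ->
  ret_pt 0%nat = x 0%nat /\ ret_pt n = x n /\
  (forall i, (1 <= i <= n)%nat ->
     Ak (kk i) (ret_pt (i - 1)%nat) /\ Ak (kk i) (ret_pt i) /\
     dpath X (Xk (kk i)) (ret_pt (i - 1)%nat) (ret_pt i) (ret_piece i)) /\
  dheq X Xall (cats g n) (cats ret_piece n).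
Proof.
  intros hn hA0 hAn. split; [|split; [|split]].
  - apply ret_pt_fix; auto; lia.
  - apply ret_pt_fix; auto.
  - exact ret_piece_spec.
  - apply chain_retract_eq; auto.
Qed.

End Chain.

Lemma subdivision (gamma : I -> pt X) (x0 x1 : pt X) : dpath X Xall x0 x1 gamma ->
  (exists (n : nat) (t : nat -> R), t 0%nat = 0 /\ t n = 1 /\
     (forall i, (i < n)%nat -> t i <= t (S i)) /\
     (forall i, (i < n)%nat -> exists k, (k = 1 \/ k = 2)%nat /\
         forall s : I, t i <= ival s <= t (S i) -> Xk k (gamma s))) ->
  exists (n : nat) (xs : nat -> pt X) (kk : nat -> nat) (g : nat -> I -> pt X),
    (1 <= n)%nat /\ xs 0%nat = x0 /\ xs n = x1 /\
    (forall i, (1 <= i <= n)%nat ->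
       (kk i = 1 \/ kk i = 2)%nat /\ dpath X (Xk (kk i)) (xs (i - 1)%nat) (xs i) (g i)) /\
    dheq X Xall gamma (cats g n).
Proof.
  intros [gd [_ [g0 g1]]] [n [t [t0 [tn [tstep tpieces]]]]].
  assert (hn : (1 <= n)%nat) by (destruct n; [rewrite t0 in tn; lra | lia]).
  destruct (choice (fun i k => (1 <= i <= n)%nat -> (k = 1 \/ k = 2)%nat /\
              forall s : I, t (i - 1)%nat <= ival s <= t i -> Xk k (gamma s))) as [kk hkk].
  { intro i. destruct (classic (1 <= i <= n)%nat) as [hi|hi]; [|exists 0%nat; tauto].
    destruct (tpieces (i - 1)%nat ltac:(lia)) as [k hk].
    replace (S (i - 1)) with i in hk by lia. exists k; auto. }
  exists n, (fun i => gamma (clampI (t i))), kk, (fun i u => gamma (piece t i u)).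
  split; [exact hn | split; [| split; [| split]]].
  - rewrite t0, clamp_le0 by lra. exact g0.
  - rewrite tn, clamp_ge1 by lra. exact g1.
  - intros i hi. destruct (hkk i hi) as [hk hX]. split; [exact hk|].
    destruct (piece_spec t n tstep t0 tn i hi) as [c [nd [p0 [p1 pr]]]].
    split; [apply dip_reparam; auto | split; [intro u; apply hX, pr |]].
    split; f_equal; apply I_eq; rewrite ?p0, ?p1, clamp_val; auto;
      apply (partition_range t n tstep t0 tn); lia.
  - rewrite (cats_comp gamma (piece t) n).
    destruct (cats_pieces t n tstep t0 tn n) as [c [nd [p0 p1]]]; [lia|].
    apply dheq_reparam; auto; congruence.
Qed.

End VanKampen.


Theorem lemma4p1 (X : Dspace) (Xk Ak : nat -> pt X -> Prop)
  (* van Kampen setup with B_k = X_k *)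
  (hcover : forall x, Int X (Xk 1%nat) x \/ Int X (Xk 2%nat) x)
  (hdip : forall g, dip X g ->
     exists (n : nat) (t : nat -> R), t 0%nat = 0 /\ t n = 1 /\
       (forall i, (i < n)%nat -> t i <= t (S i)) /\
       (forall i, (i < n)%nat -> exists k, (k = 1 \/ k = 2)%nat /\
           forall s : I, t i <= ival s <= t (S i) -> Xk k (g s)))
  (hX0 : forall x, Xk 0%nat x <-> Xk 1%nat x /\ Xk 2%nat x)
  (hAsub : forall k x, (k <= 2)%nat -> Ak k x -> Xk k x)
  (hA0 : forall x, Ak 0%nat x <-> Ak 1%nat x /\ Ak 2%nat x)
  (hAint : forall x, Ak 1%nat x \/ Ak 2%nat x ->
     IntRel X (fun z => Ak 1%nat z \/ Ak 2%nat z) (Ak 1%nat) x \/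
     IntRel X (fun z => Ak 1%nat z \/ Ak 2%nat z) (Ak 2%nat) x)
  (* compatible future retracts *)
  (Pob : nat -> pt X -> pt X) (Pmor : nat -> (I -> pt X) -> (I -> pt X))
  (eta : nat -> pt X -> I -> pt X)
  (hP : Compatible X Xk Ak Pob Pmor eta)
  (* a morphism [gamma] : a -> a' of pi1(X, A) *)
  (a a' : pt X) (ha : Ak 1%nat a \/ Ak 2%nat a) (ha' : Ak 1%nat a' \/ Ak 2%nat a')
  (gamma : I -> pt X) (hgamma : dpath X (fun _ => True) a a' gamma) :
  exists (n : nat) (y : nat -> pt X) (k : nat -> nat) (alpha : nat -> I -> pt X),
    (1 <= n)%nat /\ y 0%nat = a /\ y n = a' /\
    (forall i, (1 <= i <= n)%nat ->
       (k i = 1 \/ k i = 2)%nat /\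
       Ak (k i) (y (i - 1)%nat) /\ Ak (k i) (y i) /\
       dpath X (Xk (k i)) (y (i - 1)%nat) (y i) (alpha i)) /\
    dheq X (fun _ => True) gamma (cats alpha n).
Proof.
  destruct (subdivision X Xk gamma a a' hgamma (hdip gamma (proj1 hgamma)))
    as [n [x [kk [g [hn [x0 [xn [hg hsub]]]]]]]].
  assert (hkk : forall i, (1 <= i <= n)%nat -> (kk i = 1 \/ kk i = 2)%nat)
    by (intros i hi; apply hg, hi).
  assert (hpieces : forall i, (1 <= i <= n)%nat ->
            dpath X (Xk (kk i)) (x (i - 1)%nat) (x i) (g i)) by (intros i hi; apply hg, hi).
  destruct (retract_chain X Xk Ak Pob Pmor eta hX0 hAsub hP x kk g n hkk hpieces hn)
    as [y0 [yn [hret heq]]]; [rewrite x0; auto | rewrite xn; auto |].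
  exists n, (ret_pt X Pob x kk), kk, (ret_piece X Pmor kk g).
  split; [exact hn | split; [congruence | split; [congruence | split]]].
  - intros i hi. split; [apply hkk, hi | apply hret, hi].
  - exact (dheq_trans X _ _ _ _ hsub heq).
Qed.
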